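(* Let $(A,\Delta)=\mathrm{QMap}_\phi(\mathrm{Qs}(M_2))$ with generators $\alpha,\beta,\gamma$ as described below, and set $X=\alpha+\alpha^*$, $Y=\beta+\gamma$. Then $X=X^*$, $Y=Y^*$, $XY+YX=0$, $X^2+Y^2=\mathbb{1}_A$, $\Delta(X)=\mathbb{1}_A\otimes X+X\otimes Y$ and $\Delta(Y)=Y\otimes Y$.
   Context: $A$ is the universal unital $\mathrm{C}^*$-algebra generated by $\alpha,\beta,\gamma$ subject to $\beta=\beta^*$, $\gamma=\gamma^*$, $\alpha^*\alpha+\gamma^2+\alpha\alpha^*+\beta^2=\mathbb{1}$, $\alpha^*\beta+\gamma\alpha^*+\alpha\gamma+\beta\alpha=0$, $\alpha^2+\beta\gamma=0$, $\alpha\beta+\beta\alpha^*=0$, $\gamma\alpha+\alpha^*\gamma=0$, and $\Delta:A\to A\otimes A$ (minimal tensor product) is the unital $*$-homomorphism given by $\Delta(\alpha)=\mathbb{1}\otimes\alpha+(\alpha^*\alpha+\gamma^2)\otimes(\alpha^*-\alpha)+\alpha\otimes\beta+\alpha^*\otimes\gamma$, $\Delta(\beta)=(\alpha\gamma+\beta\alpha)\otimes(\alpha-\alpha^* )+\beta\otimes\beta+\gamma\otimes\gamma$, $\Delta(\gamma)=(\beta\alpha+\alpha\gamma)\otimes(\alpha^*-\alpha)+\gamma\otimes\beta+\beta\otimes\gamma$. (This $(A,\Delta)$ is the quantum commutant of the automorphism $\phi(m)=wmw$, $w=\begin{bmatrix}0&1\\1&0\end{bmatrix}$, of $M_2$.)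 *)

From HB Require Import structures.
From mathcomp Require Import all_boot all_order all_algebra all_field.
Set Implicit Arguments. Unset Strict Implicit. Unset Printing Implicit Defensive.
Import Order.TTheory GRing.Theory Num.Theory.
Local Open Scope ring_scope.

Definition star_alg (A : algType algC) (s : A -> A) : Prop :=
  [/\ involutive s,
      forall x y, s (x + y) = s x + s y,
      forall (c : algC) x, s (c *: x) = c^* *: s x,
      forall x y, s (x * y) = s y * s x
    & s 1 = 1].

(* t : A -> A -> B models the elementary tensors a (x) b in the tensor
   product algebra B = A (x) A: bilinear, multiplicative on elementary
   tensors, unital, and compatible with the involutions. *)
Definition tensor_map (A B : algType algC) (sA : A -> A) (sB : B -> B)
  (t : A -> A -> B) : Prop :=
  [/\ forall (c : algC) a a' b, t (c *: a + a') b = c *: t a b + t a' b,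
      forall (c : algC) a b b', t a (c *: b + b') = c *: t a b + t a b',
      forall a b a' b', t a b * t a' b' = t (a * a') (b * b'),
      t 1 1 = 1
    & forall a b, sB (t a b) = t (sA a) (sA b)].

Definition star_hom (A B : algType algC) (sA : A -> A) (sB : B -> B)
  (f : A -> B) : Prop :=
  [/\ forall (c : algC) x y, f (c *: x + y) = c *: f x + f y,
      forall x y, f (x * y) = f x * f y,
      f 1 = 1
    & forall x, f (sA x) = sB (f x)].

From HB Require Import structures.
From mathcomp Require Import all_boot all_order all_algebra all_field.
Import Order.TTheory GRing.Theory Num.Theory.
Local Open Scope ring_scope.

(* Then, in a section carrying the defining relations of A,
   each claim is derived: anticommutation is the sum of the relations
   R2, R4, R5; the sum of squares is R1 plus R3 and its adjoint; the
   coproduct formulas follow because Delta(a') is the adjoint of Delta(a)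
   and the correction terms t P (a' - a) and t P (a - a') cancel pairwise
   (here a' denotes the adjoint sA a). *)

Section StarAlgebra.
Context {A : algType algC} {sA : A -> A}.
Hypothesis HA : star_alg sA.

Lemma star0 : sA 0 = 0.
Proof. by case: HA => _ sD _ _ _; apply: (addrI (sA 0)); rewrite -sD !addr0. Qed.

Lemma starN (x : A) : sA (- x) = - sA x.
Proof. by case: HA => _ sD _ _ _; apply: (addrI (sA x)); rewrite -sD !subrr star0. Qed.

Lemma star_real_part (x : A) : sA (x + sA x) = x + sA x.
Proof. by case: HA => sK sD _ _ _; rewrite sD sK addrC. Qed.

End StarAlgebra.

Section TensorMap.
Context {A B : algType algC} {sA : A -> A} {sB : B -> B} {t : A -> A -> B}.
Hypothesis Ht : tensor_map sA sB t.

Lemma tensorDl (x x' y : A) : t (x + x') y = t x y + t x' y.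
Proof. by case: Ht => tl _ _ _ _; rewrite -[x](@scale1r algC) tl !scale1r. Qed.

Lemma tensorDr (x y y' : A) : t x (y + y') = t x y + t x y'.
Proof. by case: Ht => _ tr _ _ _; rewrite -[y](@scale1r algC) tr !scale1r. Qed.

Lemma tensor_expand (x x' y y' : A) :
  t (x + x') (y + y') = t x y + t x y' + (t x' y + t x' y').
Proof. by rewrite tensorDl !tensorDr. Qed.

(* Tensors with opposite right factors cancel; this kills the correction
   terms in the coproducts of a and b, g. *)
Lemma tensor_cancel (x y z : A) : t x (y - z) + t x (z - y) = 0.
Proof.
have tx0 : t x 0 = 0 by apply: (addrI (t x 0)); rewrite -tensorDr !addr0.
by rewrite -tensorDr addrA subrK subrr tx0.
Qed.

End TensorMap.

Section StarHom.
Context {A B : algType algC} {sA : A -> A} {sB : B -> B} {f : A -> B}.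
Hypothesis Hf : star_hom sA sB f.

Lemma star_homD (x y : A) : f (x + y) = f x + f y.
Proof. by case: Hf => lin _ _ _; rewrite -[x](@scale1r algC) lin !scale1r. Qed.

End StarHom.

Section QuantumCommutant.
Context {A B : algType algC} {sA : A -> A} {sB : B -> B}.
Context {t : A -> A -> B} {Delta : A -> B} {a b g : A}.
Hypotheses (HA : star_alg sA) (HB : star_alg sB) (Ht : tensor_map sA sB t).
Hypothesis HD : star_hom sA sB Delta.
Hypotheses (Hb : sA b = b) (Hg : sA g = g).
Hypothesis R1 : sA a * a + g * g + a * sA a + b * b = 1.
Hypothesis R2 : sA a * b + g * sA a + a * g + b * a = 0.
Hypothesis R3 : a * a + b * g = 0.
Hypothesis R4 : a * b + b * sA a = 0.
Hypothesis R5 : g * a + sA a * g = 0.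
Hypothesis Da :
  Delta a = t 1 a + t (sA a * a + g * g) (sA a - a) + t a b + t (sA a) g.
Hypothesis Db : Delta b = t (a * g + b * a) (a - sA a) + t b b + t g g.
Hypothesis Dg : Delta g = t (b * a + a * g) (sA a - a) + t g b + t b g.

Let X := a + sA a.
Let Y := b + g.

Lemma Y_selfadjoint : sA Y = Y.
Proof. by case: HA => _ sD _ _ _; rewrite /Y sD Hb Hg. Qed.

(* XY + YX is the sum of the left-hand sides of R4, R5 and R2. *)
Lemma XY_anticommute : X * Y + Y * X = 0.
Proof.
have -> : X * Y + Y * X =
    (a * b + b * sA a) + (g * a + sA a * g)
    + (sA a * b + g * sA a + a * g + b * a).
  rewrite /X /Y !mulrDl !mulrDr !addrA.
  by rewrite (ACl (1*6*7*4*3*8*2*5)%AC).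
by rewrite R4 R5 R2 !addr0.
Qed.

(* X^2 + Y^2 is R1 plus R3 plus the adjoint of R3. *)
Lemma XY_sum_squares : X * X + Y * Y = 1.
Proof.
have R3star : sA a * sA a + g * b = 0.
  by case: HA => _ sD _ sM _; rewrite -Hb -Hg -!sM -sD R3 star0.
have -> : X * X + Y * Y =
    (sA a * a + g * g + a * sA a + b * b) + (a * a + b * g)
    + (sA a * sA a + g * b).
  rewrite /X /Y !mulrDl !mulrDr !addrA.
  by rewrite (ACl (3*8*2*5*1*6*4*7)%AC).
by rewrite R1 R3 R3star !addr0.
Qed.

(* Delta (sA a) = sB (Delta a), computed factorwise; the correction term flips
   the sign of its right factor. *)
Lemma coproduct_star_a :
  Delta (sA a) =
    t 1 (sA a) + t (sA a * a + g * g) (a - sA a) + t (sA a) b + t a g.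
Proof.
case: HA => sK sD _ sM s1; case: HB => _ sBD _ _ _.
case: HD => _ _ _ Dstar; case: Ht => _ _ _ _ tstar.
have P_real : sA (sA a * a + g * g) = sA a * a + g * g by rewrite sD !sM sK Hg.
have diff_star : sA (sA a - a) = a - sA a by rewrite sD starN // sK.
by rewrite Dstar Da !sBD !tstar P_real diff_star s1 sK Hb Hg.
Qed.

(* Delta X = Delta a + sB (Delta a): the correction terms cancel and the
   remaining six elementary tensors regroup as 1 (x) X + X (x) Y. *)
Lemma coproduct_X : Delta X = t 1 X + t X Y.
Proof.
rewrite /X /Y (star_homD HD) coproduct_star_a Da.
have := tensor_cancel Ht (sA a * a + g * g) (sA a) a.
move: (t _ (sA a - a)) (t _ (a - sA a)) => u v cancel_uv.
rewrite (tensorDr Ht) (tensor_expand Ht).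
rewrite !addrA (ACl (1*5*2*6*3*8*7*4)%AC) /=.
by rewrite -(addrA _ u v) cancel_uv addr0.
Qed.

(* In Delta b + Delta g the correction terms cancel, leaving the four
   tensors b (x) b, b (x) g, g (x) b, g (x) g of Y (x) Y. *)
Lemma coproduct_Y : Delta Y = t Y Y.
Proof.
rewrite /Y (star_homD HD) Db Dg [b * a + a * g]addrC.
have := tensor_cancel Ht (a * g + b * a) a (sA a).
move: (t _ (a - sA a)) (t _ (sA a - a)) => u v cancel_uv.
rewrite (tensor_expand Ht).
rewrite !addrA (ACl (1*4*2*6*5*3)%AC) /=.
by rewrite cancel_uv add0r.
Qed.

End QuantumCommutant.

Theorem mainTheorem9 (A B : algType algC) (sA : A -> A) (sB : B -> B)
  (t : A -> A -> B) (Delta : A -> B) (a b g : A)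
  (HA : star_alg sA) (HB : star_alg sB) (Ht : tensor_map sA sB t)
  (HD : star_hom sA sB Delta)
  (Hb : sA b = b) (Hg : sA g = g)
  (R1 : sA a * a + g * g + a * sA a + b * b = 1)
  (R2 : sA a * b + g * sA a + a * g + b * a = 0)
  (R3 : a * a + b * g = 0)
  (R4 : a * b + b * sA a = 0)
  (R5 : g * a + sA a * g = 0)
  (Da : Delta a = t 1 a + t (sA a * a + g * g) (sA a - a) + t a b + t (sA a) g)
  (Db : Delta b = t (a * g + b * a) (a - sA a) + t b b + t g g)
  (Dg : Delta g = t (b * a + a * g) (sA a - a) + t g b + t b g) :
  let X := a + sA a in
  let Y := b + g in
  (sA X = X /\ sA Y = Y) /\ (X * Y + Y * X = 0 /\ X * X + Y * Y = 1) /\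
  (Delta X = t 1 X + t X Y /\ Delta Y = t Y Y).
Proof.
move=> X Y; split; [split|split; split].
- exact: star_real_part.
- exact: Y_selfadjoint HA Hb Hg.
- exact: XY_anticommute R2 R4 R5.
- exact: XY_sum_squares HA Hb Hg R1 R3.
- exact: coproduct_X HA HB Ht HD Hb Hg Da.
- exact: coproduct_Y Ht HD Db Dg.
Qed.
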